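(* Every full submagma of an equidecomposable magma $M$ is closed (as a subset of $M$).
   Context: A magma is a set with a binary operation $+$; it is equidecomposable if $x+y=x'+y'$ implies $x=x'$ and $y=y'$. A magma $N$ is full if every element of $N$ can be written as $x+y$ with $x,y\in N$. A subset $X$ of a magma $M$ is closed if $x+y\in X$ (with $x,y\in M$) implies $x,y\in X$. *)

Definition equidecomposable {M : Type} (op : M -> M -> M) : Prop :=
  forall x y x' y' : M, op x y = op x' y' -> x = x' /\ y = y'.

Definition is_submagma {M : Type} (op : M -> M -> M) (N : M -> Prop) : Prop :=
  forall x y : M, N x -> N y -> N (op x y).

Definition full {M : Type} (op : M -> M -> M) (N : M -> Prop) : Prop :=
  forall z : M, N z -> exists x y : M, N x /\ N y /\ z = op x y.

Definition closed_subset {M : Type} (op : M -> M -> M) (X : M -> Prop) : Prop :=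
  forall x y : M, X (op x y) -> X x /\ X y.


Lemma equidecomposable_full_closed (M : Type) (op : M -> M -> M) (X : M -> Prop) :
  equidecomposable op -> full op X -> closed_subset op X.
Proof.
  intros Heq Hfull x y Hxy.
  destruct (Hfull _ Hxy) as [a [b [Ha [Hb Hab]]]].
  destruct (Heq _ _ _ _ Hab) as [-> ->].
  split; assumption.
Qed.

Theorem lemma5p9 (M : Type) (op : M -> M -> M) (N : M -> Prop) :
  equidecomposable op -> is_submagma op N -> full op N -> closed_subset op N.
Proof.
  intros Heq _ Hfull.
  exact (equidecomposable_full_closed M op N Heq Hfull).
Qed.
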